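(* Let $H$ be a real Hilbert space, $C\subseteq H$ nonempty, $\varphi:[0,\infty)\to[0,\infty)$ an increasing function vanishing only at $0$, and $A:H\to2^H$ a maximally monotone operator which is uniformly monotone on $C$ with modulus $\varphi$. Let $\gamma>0$ be such that $J_{\gamma A}(C)\subseteq C$. Then $J_{\gamma A}$ is uniformly firmly nonexpansive on $C$ with modulus $\gamma\varphi$.
   Context: $J_{\gamma A}:=(id_H+\gamma A)^{-1}$ (single-valued on $H$). $A$ is uniformly monotone on $C$ with modulus $\varphi$ if for all $x,y\in C$ and $u\in A(x)$, $v\in A(y)$: $\langle x-y,u-v\rangle\ge\varphi(\|x-y\|)$. A map $T$ is uniformly firmly nonexpansive on $C$ with modulus $\phi$ if $T(C)\subseteq C$ and for all $x,y\in C$, $t\in[0,1]$: $\|Tx-Ty\|^2\le\|((1-t)x+tTx)-((1-t)y+tTy)\|^2-2(1-t)\phi(\|Tx-Ty\|)$. *)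

(* A real Hilbert space is modelled as a complete
   normed module H over a realType R, equipped with an inner product [ip]
   that induces its norm. *)
From HB Require Import structures.
From mathcomp Require Import all_boot all_order all_algebra.
From mathcomp Require Import all_classical all_reals all_analysis.
Set Implicit Arguments. Unset Strict Implicit. Unset Printing Implicit Defensive.
Import Order.TTheory GRing.Theory Num.Theory.
Import numFieldNormedType.Exports.
Local Open Scope classical_set_scope.
Local Open Scope ring_scope.

Section Defs.
Context {R : realType} {H : normedModType R}.

Definition is_inner_product (ip : H -> H -> R) : Prop :=
  [/\ (forall x y, ip x y = ip y x),
      (forall a x y z, ip (a *: x + y) z = a * ip x z + ip y z) &
      (forall x, ip x x = `|x| ^+ 2)].

Definition monotone_op (ip : H -> H -> R) (A : H -> set H) : Prop :=
  forall x y u v, A x u -> A y v -> 0 <= ip (x - y) (u - v).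

Definition maximally_monotone (ip : H -> H -> R) (A : H -> set H) : Prop :=
  monotone_op ip A /\
  forall B : H -> set H, monotone_op ip B ->
    (forall x u, A x u -> B x u) -> forall x u, B x u -> A x u.

Definition uniformly_monotone_on (ip : H -> H -> R) (A : H -> set H)
    (C : set H) (phi : R -> R) : Prop :=
  forall x y u v, C x -> C y -> A x u -> A y v ->
    phi `|x - y| <= ip (x - y) (u - v).

(* J is the resolvent J_{gamma A} = (id + gamma A)^{-1}, as a single-valued
   map on all of H:  J x = p  iff  x \in p + gamma A p. *)
Definition is_resolvent (A : H -> set H) (gamma : R) (J : H -> H) : Prop :=
  forall x p, J x = p <-> exists2 u, A p u & x = p + gamma *: u.

Definition uniformly_firmly_nonexpansive_on (T : H -> H) (C : set H)
    (phi : R -> R) : Prop :=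
  (forall x, C x -> C (T x)) /\
  forall x y t, C x -> C y -> 0 <= t <= 1 ->
    `|T x - T y| ^+ 2 <=
      `|((1 - t) *: x + t *: T x) - ((1 - t) *: y + t *: T y)| ^+ 2
      - 2 * (1 - t) * phi `|T x - T y|.

End Defs.

(* Write p := J x and q := J y.  By definition of the resolvent, x - p and
   y - q lie in gamma A p and gamma A q, so uniform monotonicity on C gives
   gamma phi(|p - q|) <= <p - q, (x - p) - (y - q)>.  The point
   (1 - t) x + t p equals p + (1 - t)(x - p), hence the difference of the two
   convex combinations is (p - q) + (1 - t) w with w := (x - p) - (y - q), and
   expanding its squared norm yields the claim. *)
From HB Require Import structures.
From mathcomp Require Import all_boot all_order all_algebra.
From mathcomp Require Import all_classical all_reals all_analysis.
From mathcomp Require Import ring.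
Import Order.TTheory GRing.Theory Num.Theory.
Import numFieldNormedType.Exports.
Local Open Scope classical_set_scope.
Local Open Scope ring_scope.

Section InnerProduct.
Context {R : realType} {H : normedModType R} {ip : H -> H -> R}.
Hypothesis ip_inner : is_inner_product ip.

Lemma ipC (x y : H) : ip x y = ip y x.
Proof. by case: ip_inner. Qed.

Lemma ip0l (z : H) : ip 0 z = 0.
Proof.
case: ip_inner => _ ipL _; have := ipL 1 0 0 z.
by rewrite scale1r !addr0 mul1r => /eqP; rewrite addrC -subr_eq subrr eq_sym => /eqP.
Qed.

Lemma ipDl (x y z : H) : ip (x + y) z = ip x z + ip y z.
Proof. by case: ip_inner => _ ipL _; rewrite -[x in LHS]scale1r ipL mul1r. Qed.

Lemma ipZl (a : R) (x z : H) : ip (a *: x) z = a * ip x z.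
Proof. by case: ip_inner => _ ipL _; rewrite -[_ *: x]addr0 ipL ip0l addr0. Qed.

Lemma ipDr (z x y : H) : ip z (x + y) = ip z x + ip z y.
Proof. by rewrite ipC ipDl ![ip _ z]ipC. Qed.

Lemma ipZr (a : R) (z x : H) : ip z (a *: x) = a * ip z x.
Proof. by rewrite ipC ipZl ipC. Qed.

Lemma ipxx (x : H) : ip x x = `|x| ^+ 2.
Proof. by case: ip_inner. Qed.

Lemma sqr_norm_addZ (a w : H) (s : R) :
  `|a + s *: w| ^+ 2 = `|a| ^+ 2 + 2 * s * ip a w + s ^+ 2 * `|w| ^+ 2.
Proof. by rewrite -!ipxx ipDl !ipDr !ipZl !ipZr (ipC w a); ring. Qed.

Lemma sqr_norm_le_addZ (a w : H) (s c : R) : 0 <= s -> c <= ip a w ->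
  `|a| ^+ 2 <= `|a + s *: w| ^+ 2 - 2 * s * c.
Proof.
move=> s_ge0 c_le; rewrite sqr_norm_addZ -subr_ge0.
have -> : `|a| ^+ 2 + 2 * s * ip a w + s ^+ 2 * `|w| ^+ 2 - 2 * s * c - `|a| ^+ 2
          = 2 * s * (ip a w - c) + s ^+ 2 * `|w| ^+ 2 by ring.
by rewrite addr_ge0 ?mulr_ge0 ?sqr_ge0 ?subr_ge0.
Qed.

End InnerProduct.

Lemma convex_comb_shift (R : pzRingType) (V : lmodType R) (t : R) (x p : V) :
  (1 - t) *: x + t *: p = p + (1 - t) *: (x - p).
Proof. by rewrite scalerBr !scalerBl !scale1r opprB [RHS]addrCA [p + _]addrC subrK. Qed.

Lemma convex_comb_sub (R : pzRingType) (V : lmodType R) (t : R) (x y p q : V) :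
  ((1 - t) *: x + t *: p) - ((1 - t) *: y + t *: q)
  = (p - q) + (1 - t) *: ((x - p) - (y - q)).
Proof. by rewrite !convex_comb_shift opprD addrACA -scalerBr. Qed.

Section Resolvent.
Context {R : realType} {H : normedModType R} {ip : H -> H -> R}.
Context {A : H -> set H} {gamma : R} {J : H -> H}.
Hypothesis resolvent_J : is_resolvent A gamma J.

Lemma resolvent_residual (x : H) : exists2 u, A (J x) u & x - J x = gamma *: u.
Proof.
have [u Au xE] := (resolvent_J x (J x)).1 erefl.
by exists u; rewrite // {1}xE addrC addKr.
Qed.

Lemma resolvent_uniformly_monotone {C : set H} {phi : R -> R} {x y : H} :
  is_inner_product ip -> uniformly_monotone_on ip A C phi -> 0 <= gamma ->
  C (J x) -> C (J y) ->
  gamma * phi `|J x - J y| <= ip (J x - J y) ((x - J x) - (y - J y)).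
Proof.
move=> ip_inner UM gamma_ge0 CJx CJy.
have [u Au ->] := resolvent_residual x; have [v Av ->] := resolvent_residual y.
by rewrite -scalerBr (ipZr ip_inner) ler_wpM2l //; exact: UM CJx CJy Au Av.
Qed.

End Resolvent.

Theorem proposition4p8 (R : realType) (H : completeNormedModType R)
  (ip : H -> H -> R) (A : H -> set H) (C : set H) (phi : R -> R)
  (gamma : R) (J : H -> H) :
  is_inner_product ip ->
  C !=set0 ->
  (forall t, 0 <= t -> 0 <= phi t) ->
  (forall s t, 0 <= s -> s <= t -> phi s <= phi t) ->
  (forall t, 0 <= t -> (phi t = 0 <-> t = 0)) ->
  maximally_monotone ip A ->
  uniformly_monotone_on ip A C phi ->
  0 < gamma ->
  is_resolvent A gamma J ->
  (forall x, C x -> C (J x)) ->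
  uniformly_firmly_nonexpansive_on J C (fun t => gamma * phi t).
Proof.
move=> ip_inner _ _ _ _ _ UM gamma_gt0 RJ CJ.
split=> // x y t Cx Cy /andP[_ t_le1].
rewrite convex_comb_sub.
apply: (sqr_norm_le_addZ ip_inner); first by rewrite subr_ge0.
by have := resolvent_uniformly_monotone RJ ip_inner UM (ltW gamma_gt0) (CJ _ Cx) (CJ _ Cy).
Qed.
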